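(* Let $G$ be a tricyclic graph with at least one pendant vertex whose base $\widetilde G$ consists of three cycles that pairwise have exactly one vertex $u$ in common (i.e. $\widetilde G$ is the union of three cycles sharing only the single vertex $u$). Then $G\notin\mathscr{G}_{a,b}$ for all integers $a,b$.
   Context: All graphs are simple and connected; $d_G(v)$ is the degree of $v$, $N_G(v)$ its neighbourhood. A tricyclic graph is a connected graph with $|E_G|=|V_G|+2$. For integers $a,b$, $\mathscr{G}_{a,b}$ is the set of connected graphs $G$ such that for every $v\in V_G$, $\sum_{u\in N_G(v)}d_G(u)=a\,d_G(v)+b-d_G(v)^2$ (equivalently, $G$ is connected and its signless Laplacian $D+A$ has exactly two main eigenvalues with parameters $a,b$). A pendant vertex is a vertex of degree $1$. The base $\widetilde{G}$ of $G$ is the subgraph obtained from $G$ by repeatedly deleting pendant vertices until none remain. *)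

From mathcomp Require Import all_boot all_order all_algebra.
Set Implicit Arguments. Unset Strict Implicit. Unset Printing Implicit Defensive.
Import GRing.Theory Num.Theory.

Section Graphs.
Variables (T : finType) (e : rel T).

Definition simple_graph := symmetric e /\ irreflexive e.

Definition connected_graph := forall x y : T, connect e x y.

Definition edge_set : {set {set T}} :=
  [set E : {set T} | [exists x, exists y, (E == [set x; y]) && e x y]].

Definition deg (v : T) : nat := #|[set w | e v w]|.

Definition pendant (v : T) := deg v == 1%N.

Definition tricyclic := connected_graph /\ #|edge_set| = (#|T| + 2)%N.

Definition deg_in (S : {set T}) (v : T) : nat := #|[set w in S | e v w]|.

Definition prune (S : {set T}) : {set T} := [set v in S | deg_in S v != 1%N].

(* The base: repeatedly delete pendant vertices until none remain; at most
   #|T| rounds can remove something, so #|T| rounds reach the fixpoint. *)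
Definition base : {set T} := iter #|T| prune setT.

Definition is_cycle (c : seq T) : bool := [&& uniq c, (3 <= size c)%N & cycle e c].

Definition cycle_edge (c : seq T) (x y : T) :=
  (x \in c) && (y \in c) && ((next c x == y) || (next c y == x)).

(* The subgraph induced on B (base of a simple graph is induced) is the union of
   three cycles pairwise sharing exactly the vertex u. *)
Definition three_cycles_at (B : {set T}) (u : T) :=
  exists c1 c2 c3 : seq T,
    [/\ [&& is_cycle c1, is_cycle c2 & is_cycle c3],
        [/\ [set x in c1] :&: [set x in c2] = [set u],
            [set x in c1] :&: [set x in c3] = [set u] &
            [set x in c2] :&: [set x in c3] = [set u]],
        B = [set x in c1] :|: [set x in c2] :|: [set x in c3] &
        forall x y, x \in B -> y \in B ->
          e x y = [|| cycle_edge c1 x y, cycle_edge c2 x y | cycle_edge c3 x y]].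

Definition in_Gab (a b : int) :=
  connected_graph /\
  forall v : T, (\sum_(w | e v w) (deg w)%:Z)%R = (a * (deg v)%:Z + b - ((deg v)%:Z) ^+ 2)%R.

End Graphs.

From mathcomp Require Import all_boot all_order all_algebra.
From mathcomp Require Import zify.
Import GRing.Theory Num.Theory.
Set Implicit Arguments. Unset Strict Implicit. Unset Printing Implicit Defensive.

(* Put k := a + b - 1.  The degree condition at a pendant vertex says that its
   neighbour has degree k.  Pendant vertices hang directly on the base: otherwise
   some vertex w is deleted in the second pruning round, so w has a single
   non-pendant neighbour p and deg w = k; comparing the degree conditions at w
   and at p shows that all other neighbours of p are pendant as well, so after
   one round only the edge wp survives and the base is empty.  Hence the base
   consists of the non-pendant vertices, its vertices other than the common
   vertex u of the three cycles have degree 2 or k, and u has degree 6 or k.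
   The degree conditions at u and at its neighbours leave only a = 9,
   deg u = 6, and a single neighbour x of u of degree k; the other five
   neighbours of u have degree 2, and tracing each of them through a
   degree-k vertex leads back to u, so they are all adjacent to x, which
   however has only two neighbours in the base. *)

Section Graphs.
Variables (T : finType) (e : rel T).

Lemma deg_in_setT v : deg_in e setT v = deg e v.
Proof.
by rewrite /deg_in /deg (_ : [set w in setT | e v w] = [set w | e v w]) //;
  apply/setP => w; rewrite !inE.
Qed.

Lemma deg_sum1 v : deg e v = \sum_(w | e v w) 1.
Proof. by rewrite sum1_card /deg cardsE. Qed.

Lemma deg_in_eq1P (S : {set T}) v y y' : deg_in e S v = 1 ->
  y \in S -> y' \in S -> e v y -> e v y' -> y = y'.
Proof.
move=> /eqP /cards1P [z Hz] yS y'S evy evy'.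
have : y \in [set w in S | e v w] by rewrite inE yS evy.
have : y' \in [set w in S | e v w] by rewrite inE y'S evy'.
by rewrite Hz !inE => /eqP -> /eqP ->.
Qed.

Lemma deg_eq1P v y y' : deg e v = 1 -> e v y -> e v y' -> y = y'.
Proof. by rewrite -deg_in_setT => /deg_in_eq1P; apply; rewrite in_setT. Qed.

Lemma deg_gt0 v y : e v y -> 0 < deg e v.
Proof. by move=> evy; apply/card_gt0P; exists y; rewrite inE. Qed.

Lemma deg_gt1 v y y' : e v y -> e v y' -> y != y' -> 1 < deg e v.
Proof. by move=> evy evy' yy'; apply/card_gt1P; exists y, y'; rewrite !inE evy evy'. Qed.

Lemma deg_gt1_nbr v p : 1 < deg e v -> exists2 y, e v y & y != p.
Proof.
case/card_gt1P => y [y' [+ + yy']]; rewrite !inE => evy evy'.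
by case: (eqVneq y p) => [yp|]; [exists y' => //; rewrite -yp eq_sym | exists y].
Qed.

Lemma connected_closed (X : {set T}) : connected_graph e ->
  (forall x y, x \in X -> e x y -> y \in X) -> forall x y, x \in X -> y \in X.
Proof.
move=> conn closedX x y xX; have /connectP [s es ->] := conn x y.
elim: s x xX es => //= z s IH x xX /andP[exz es].
exact: IH (closedX _ _ xX exz) es.
Qed.

Hypothesis e_sym : symmetric e.

Lemma sum_deg_nbrs v : \sum_(y | e v y) deg e y = deg e v + \sum_(y | e v y) (deg e y).-1.
Proof.
rewrite deg_sum1 -big_split /=; apply: eq_bigr => y evy.
by rewrite add1n prednK // (@deg_gt0 y v) // e_sym.
Qed.

Lemma sum_deg_nbrs_ge v w g : e v w -> e v g -> w != g ->
  deg e v + (deg e w).-1 + (deg e g).-1 <= \sum_(y | e v y) deg e y.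
Proof.
move=> evw evg wg; rewrite sum_deg_nbrs -addnA leq_add2l.
by rewrite (bigD1 w) // (bigD1 g) /= ?evg 1?eq_sym // addnA leq_addr.
Qed.

Lemma sum_deg_nbrs_pendant v p : e v p ->
    (forall y, e v y -> y != p -> deg e y = 1) ->
  \sum_(y | e v y) deg e y = deg e p + (deg e v).-1.
Proof.
move=> evp pend; rewrite sum_deg_nbrs (bigD1 p) //= big1 => [|y /andP[evy yp]].
  have := deg_gt0 evp; have := @deg_gt0 p v; rewrite e_sym => /(_ evp); lia.
by rewrite pend.
Qed.

End Graphs.

Section Pruning.
Variables (T : finType) (e : rel T).

Lemma prune_subset S : prune e S \subset S.
Proof. by apply/subsetP => v; rewrite inE => /andP[]. Qed.

Lemma iter_prune_subset n S : iter n (prune e) S \subset S.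
Proof. by elim: n => //= n IH; apply: subset_trans IH; apply: prune_subset. Qed.

Lemma iter_prune_fixed n S : prune e S = S -> iter n (prune e) S = S.
Proof. by move=> fixS; elim: n => //= n ->. Qed.

Lemma mem_prune_setT v : (v \in prune e setT) = (deg e v != 1).
Proof. by rewrite inE in_setT deg_in_setT. Qed.

Lemma prune2_leaf w : w \in prune e setT -> w \notin prune e (prune e setT) ->
  exists p, [/\ p \in prune e setT, e w p & forall y, e w y -> y != p -> deg e y = 1].
Proof.
move=> wS1; rewrite inE wS1 negbK => /[dup] /eqP dw /cards1P [p Hp].
have : p \in [set y in prune e setT | e w y] by rewrite Hp set11.
rewrite inE => /andP[pS1 ewp]; exists p; split=> // y ewy yp.
apply/eqP/negPn; rewrite -mem_prune_setT; apply: contra yp => yS1.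
by rewrite (deg_in_eq1P dw yS1 pS1 ewy ewp).
Qed.

Hypotheses (e_sym : symmetric e) (e_conn : connected_graph e).

Lemma prune1_subset_pair w p : e w p ->
    (forall y, e w y -> y != p -> deg e y = 1) ->
    (forall y, e p y -> y != w -> deg e y = 1) ->
  prune e setT \subset [set w; p].
Proof.
move=> ewp w_star p_star.
pose X := [set x | [|| x == w, x == p, e w x | e p x]].
have closedX x y : x \in X -> e x y -> y \in X.
  rewrite !inE => /or4P[/eqP->|/eqP->|ewx|epx] exy.
  - by rewrite exy !orbT.
  - by rewrite exy !orbT.
  - case: (eqVneq x p) => [xp|xp]; first by rewrite -xp exy !orbT.
    by rewrite (deg_eq1P (w_star x ewx xp) exy (_ : e x w)) ?eqxx // e_sym.
  - case: (eqVneq x w) => [xw|xw]; first by rewrite -xw exy !orbT.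
    by rewrite (deg_eq1P (p_star x epx xw) exy (_ : e x p)) ?eqxx ?orbT // e_sym.
apply/subsetP => x; rewrite mem_prune_setT => dx.
have : x \in X by apply: (connected_closed e_conn closedX (x := w)); rewrite inE eqxx.
rewrite !inE => /or4P[->|->|ewx|epx]; rewrite ?orbT //.
  by case: (eqVneq x p) => [|xp]; rewrite ?orbT //; move: dx; rewrite w_star.
by case: (eqVneq x w) => [->|xw]; rewrite ?eqxx //; move: dx; rewrite p_star.
Qed.

End Pruning.

Section ThreeCycles.
Variables (T : finType) (e : rel T).

Lemma cycle_edgeE (c : seq T) x y : uniq c -> x \in c ->
  cycle_edge c x y = (y == next c x) || (y == prev c x).
Proof.
move=> Uc xc; rewrite /cycle_edge xc /=; apply/idP/idP.
- case/andP => yc /orP[/eqP <-|/eqP <-]; first by rewrite eqxx.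
  by rewrite prev_next // eqxx orbT.
- by case/orP => /eqP ->; rewrite ?mem_next ?mem_prev xc ?next_prev ?eqxx ?orbT.
Qed.

Lemma cycle_edge_notin (c : seq T) x y : x \notin c -> cycle_edge c x y = false.
Proof. by rewrite /cycle_edge => /negbTE ->. Qed.

Lemma next_prev_neq (c : seq T) x : is_cycle e c -> x \in c ->
  [/\ next c x != x, prev c x != x & next c x != prev c x].
Proof.
case/and3P => Uc Sc _ xc; case: (rot_to xc) => i s Hr.
have Ur : uniq (rot i c) by rewrite rot_uniq.
rewrite -(next_rot i Uc) -(prev_rot i Uc).
have [y [z [r Hs]]] : exists y z r, s = [:: y, z & r].
  move: Sc; rewrite -(size_rot i) Hr.
  by case: s {Hr} => [|y [|z r]] //= _; exists y, z, r.
have np := next_prev Ur x.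
have : uniq [:: x, y, z & r] by rewrite -Hs -Hr.
rewrite /= !inE !negb_or => /andP[/and3P[xy xz _] /andP[/andP[yz _] _]].
have nx : next (rot i c) x = y by rewrite Hr Hs /= eqxx.
have ny : next (rot i c) y = z by rewrite Hr Hs /= eq_sym (negbTE xy) eqxx.
rewrite nx eq_sym xy; split => //; apply/eqP => Hp; move: np.
  by rewrite Hp nx => /eqP; rewrite eq_sym (negbTE xy).
by rewrite -Hp ny => /eqP; rewrite eq_sym (negbTE xz).
Qed.

Lemma cycle_nbrs_sub (c : seq T) x : is_cycle e c -> x \in c ->
  [set y | cycle_edge c x y] \subset [set y in c] :\ x.
Proof.
move=> Cc xc; have [nx px _] := next_prev_neq Cc xc; have Uc : uniq c by case/and3P: Cc.
apply/subsetP => y; rewrite !inE cycle_edgeE //.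
by case/orP => /eqP->; rewrite ?nx ?px ?mem_next ?mem_prev.
Qed.

Lemma card_cycle_nbrs (c : seq T) x : is_cycle e c -> x \in c ->
  #|[set y | cycle_edge c x y]| = 2.
Proof.
move=> Cc xc; have [_ _ np] := next_prev_neq Cc xc; have Uc : uniq c by case/and3P: Cc.
rewrite (_ : [set y | _] = [set next c x; prev c x]) ?cards2 ?np //.
by apply/setP => y; rewrite !inE cycle_edgeE.
Qed.

Lemma mem_inter_cycles (c c' : seq T) u x : [set x in c] :&: [set x in c'] = [set u] ->
  (x \in c) && (x \in c') = (x == u).
Proof. by move=> I; rewrite -in_set1 -I !inE. Qed.

Lemma cycle_nbrs_inter (c c' : seq T) u : is_cycle e c ->
    [set x in c] :&: [set x in c'] = [set u] -> u \in c ->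
  [set y | cycle_edge c u y] :&: [set y | cycle_edge c' u y] = set0.
Proof.
move=> Cc I uc; apply/setP => y; rewrite !inE; apply/negbTE/andP => -[yc].
rewrite /cycle_edge => /andP[/andP[_ yc'] _].
have := subsetP (cycle_nbrs_sub Cc uc) y; rewrite inE yc => /(_ isT).
rewrite !inE -(mem_inter_cycles _ I) yc' => /andP[/negP yu yc2].
by apply: yu; rewrite yc2.
Qed.

Section Bouquet.
Variables (c1 c2 c3 : seq T) (u : T).
Hypotheses (C1 : is_cycle e c1) (C2 : is_cycle e c2) (C3 : is_cycle e c3).
Hypotheses (I12 : [set x in c1] :&: [set x in c2] = [set u])
  (I13 : [set x in c1] :&: [set x in c3] = [set u])
  (I23 : [set x in c2] :&: [set x in c3] = [set u]).

Local Notation N x :=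
  [set y | [|| cycle_edge c1 x y, cycle_edge c2 x y | cycle_edge c3 x y]].

Lemma hub_in_cycles : [/\ u \in c1, u \in c2 & u \in c3].
Proof.
have := mem_inter_cycles u I12; have := mem_inter_cycles u I13.
by rewrite eqxx => /andP[-> ->] /andP[_ ->].
Qed.

Lemma card_bouquet_hub_nbrs : #|N u| = 6.
Proof.
have [uc1 uc2 uc3] := hub_in_cycles.
rewrite (_ : N u = [set y | cycle_edge c1 u y] :|: [set y | cycle_edge c2 u y]
                   :|: [set y | cycle_edge c3 u y]); last first.
  by apply/setP => y; rewrite !inE orbA.
rewrite cardsU cardsU setIUl !cycle_nbrs_inter //.
by rewrite setU0 cards0 !card_cycle_nbrs.
Qed.

Lemma card_bouquet_nbrs x : [|| x \in c1, x \in c2 | x \in c3] -> x != u -> #|N x| = 2.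
Proof.
move=> xc xu.
have notin (c c' : seq T) : [set x in c] :&: [set x in c'] = [set u] ->
    x \in c -> x \notin c'.
  move=> I xc'; apply/negP => xc''.
  by move: (mem_inter_cycles x I); rewrite xc' xc'' (negbTE xu).
have only (c : seq T) : is_cycle e c -> x \in c ->
    (forall y, [|| cycle_edge c1 x y, cycle_edge c2 x y | cycle_edge c3 x y]
       = cycle_edge c x y) -> #|N x| = 2.
  move=> Cc xc' E; rewrite -(card_cycle_nbrs Cc xc').
  by apply: eq_card => y; rewrite !inE E.
case/or3P: xc => [xc|xc|xc]; apply: (only _ _ xc) => // y.
- rewrite (cycle_edge_notin _ (notin _ _ I12 xc)).
  by rewrite (cycle_edge_notin _ (notin _ _ I13 xc)) !orbF.
- have xc1 : x \notin c1 by apply: contraL xc => /(notin _ _ I12).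
  by rewrite (cycle_edge_notin _ xc1) (cycle_edge_notin _ (notin _ _ I23 xc)) !orbF.
- have xc1 : x \notin c1 by apply: contraL xc => /(notin _ _ I13).
  have xc2 : x \notin c2 by apply: contraL xc => /(notin _ _ I23).
  by rewrite (cycle_edge_notin _ xc1) (cycle_edge_notin _ xc2).
Qed.

End Bouquet.

Lemma three_cycles_nbrs B u : three_cycles_at e B u ->
  [/\ u \in B, #|[set y in B | e u y]| = 6 &
      forall x, x \in B -> x != u -> #|[set y in B | e x y]| = 2].
Proof.
move=> [c1 [c2 [c3 [/and3P[C1 C2 C3] [I12 I13 I23] HB He]]]].
have mem_B x : (x \in B) = [|| x \in c1, x \in c2 | x \in c3] by rewrite HB !inE orbA.
have nbrsE x : x \in B -> [set y in B | e x y] =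
    [set y | [|| cycle_edge c1 x y, cycle_edge c2 x y | cycle_edge c3 x y]].
  move=> xB; apply/setP => y; rewrite !inE.
  case yB: (y \in B); first by rewrite He.
  by move: yB; rewrite mem_B /cycle_edge; do 3 case: (y \in _); rewrite ?andbF.
have [uc1 _ _] := hub_in_cycles I12 I13.
have uB : u \in B by rewrite mem_B uc1.
split=> // [|x xB xu]; rewrite nbrsE //.
  exact: card_bouquet_hub_nbrs.
by apply: (card_bouquet_nbrs C1 C2 C3 I12 I13 I23) => //; rewrite -mem_B.
Qed.

End ThreeCycles.

Lemma leaf_support_arith (a b K D : int) : (2 <= K -> 2 <= D -> K = a + b - 1 ->
  D + (K - 1) = a * K + b - K ^+ 2 -> D + K <= a * D + b - D ^+ 2 -> False)%R.
Proof.
move=> K2 D2 HK; have -> : b = (K + 1 - a)%R by lia.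
rewrite !expr2 => Hw Hp.
(* With m := a - K - 1 the first equation reads D = m (K - 1) + 1 with m >= 1,
   and the inequality forces a >= D + 3, i.e. (m - 1) (K - 2) < 0. *)
have hD : D = ((a - K - 1) * (K - 1) + 1)%R by lia.
have m1 : (1 <= a - K - 1)%R by nia.
have aD : (D + 3 <= a)%R by nia.
have : (0 <= (a - K - 2) * (K - 2))%R by nia.
nia.
Qed.

(* D is the degree of the hub, s the number of its neighbours of degree k; the
   last two hypotheses are the degree conditions at a neighbour of degree k,
   resp. 2, whose other neighbour in the base has degree d. *)
Lemma hub_arith (a b k D : int) (s : nat) : (3 <= k -> k = a + b - 1 ->
  (D = 6 \/ (D = k /\ 7 <= k)) -> (s <= 6)%N ->
  (D - 6) + (6 - s%:Z) * 2 + s%:Z * k = a * D + b - D ^+ 2 ->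
  ((0 < s)%N -> exists2 d, d = 2 \/ d = k & (k - 2) + D + d = a * k + b - k ^+ 2) ->
  ((s < 6)%N -> exists2 d, d = 2 \/ d = k & D + d = a * 2 + b - 2 ^+ 2) ->
  [/\ D = 6, a = 9, s = 1%N & (k = 6 \/ k = 7)])%R.
Proof.
move=> k3 Hk; have {Hk} -> : b = (k + 1 - a)%R by lia.
rewrite !expr2 => HD s6 Hu Hx Hy.
case: s s6 Hu Hx Hy => [|[|[|[|[|[|[|s]]]]]]] //= _ Hu Hx Hy.
all: try (have [d [->|->] Hd] := Hy isT).
all: try (have [d' [->|->] Hd'] := Hx isT).
all: case: HD => [HD|[HD k7]]; subst D.
all: try (split; nia).
Qed.

Lemma supported_pair_arith (a b d : int) : (a = 9 -> (a + b - 1 = 6 \/ a + b - 1 = 7) ->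
  (d = 2 \/ d = a + b - 1) ->
  2 + d + (a + b - 1) - 2 = a * (a + b - 1) + b - (a + b - 1) ^+ 2 -> False)%R.
Proof.
move=> -> k67; have [->|->] : (b = -2 \/ b = -1)%R by case: k67 => k; [left | right]; lia.
  by case=> ->; rewrite expr2; lia.
by case=> ->; rewrite expr2; lia.
Qed.

Section TwoMainEigenvalues.
Variables (T : finType) (e : rel T) (a b : int).
Hypotheses (e_sym : symmetric e) (e_conn : connected_graph e).
Hypothesis deg_eq : forall v,
  (\sum_(w | e v w) (deg e w)%:Z = a * (deg e v)%:Z + b - (deg e v)%:Z ^+ 2)%R.

Lemma sum_deg_nbrsZ v :
  ((\sum_(w | e v w) deg e w)%:Z = a * (deg e v)%:Z + b - (deg e v)%:Z ^+ 2)%R.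
Proof. by rewrite -deg_eq (big_morph Posz PoszD (erefl _)). Qed.

Lemma pendant_nbr_deg z y : deg e z = 1 -> e z y -> ((deg e y)%:Z = a + b - 1)%R.
Proof.
move=> dz ezy; have := sum_deg_nbrsZ z.
rewrite (big_pred1 y) => [|w /=]; last first.
  by apply/idP/eqP => [ezw|->//]; apply: deg_eq1P dz ezw ezy.
rewrite dz expr1n mulr1 => ->; lia.
Qed.

Lemma star_support_pendants w p : 1 < deg e w -> e w p ->
    (forall y, e w y -> y != p -> deg e y = 1) ->
  forall g, e p g -> g != w -> deg e g = 1.
Proof.
move=> dw ewp w_star g epg gw; apply/eqP/negPn/negP => dg.
have epw : e p w by rewrite e_sym.
have [z ewz zp] := deg_gt1_nbr p dw.
have Kw : ((deg e w)%:Z = a + b - 1)%R.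
  by apply: (pendant_nbr_deg (w_star z ewz zp)); rewrite e_sym.
have Ew := sum_deg_nbrsZ w; rewrite (sum_deg_nbrs_pendant e_sym ewp w_star) in Ew.
have Ep := sum_deg_nbrsZ p.
have wg : w != g by rewrite eq_sym.
have Sp := sum_deg_nbrs_ge e_sym epw epg wg.
have dp := deg_gt1 epw epg wg.
have dg2 : 1 < deg e g by have := @deg_gt0 _ e g p; rewrite e_sym epg => /(_ isT); lia.
apply: (leaf_support_arith (K := (deg e w)%:Z) (D := (deg e p)%:Z) _ _ Kw); lia.
Qed.

Lemma prune2_eq_prune1 u : u \in prune e (prune e setT) ->
  prune e (prune e setT) = prune e setT.
Proof.
move=> uS2; apply/eqP; rewrite eqEsubset prune_subset /=.
apply/subsetP => w wS1; apply/idPn => wS2.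
have [p [pS1 ewp w_star]] := prune2_leaf wS1 wS2.
have dw : 1 < deg e w.
  by move: wS1; rewrite mem_prune_setT; have := deg_gt0 ewp; case: (deg e w) => [|[]].
have p_star := star_support_pendants dw ewp w_star.
have pS2 : p \notin prune e (prune e setT).
  rewrite inE pS1 negbK /deg_in; apply/cards1P; exists w; apply/setP => y.
  rewrite in_set1 in_set mem_prune_setT; case: (eqVneq y w) => [->|yw].
    by rewrite -mem_prune_setT wS1 e_sym.
  by case epy: (e p y); rewrite ?andbF // (p_star y epy yw).
have := subsetP (prune1_subset_pair e_sym e_conn ewp w_star p_star) u.
by rewrite (subsetP (prune_subset _ _) _ uS2) !inE => /(_ isT) /orP[]/eqP uwp;
  [move: wS2 | move: pS2]; rewrite -uwp uS2.
Qed.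

Lemma base_eq_prune1 u : u \in base e -> base e = prune e setT.
Proof.
rewrite /base; have : 0 < #|T| by apply/card_gt0P; exists u.
case: #|T| => [//|[//|n]] _; rewrite !iterSr => uB.
have uS2 := subsetP (iter_prune_subset _ _ _) u uB.
by rewrite (prune2_eq_prune1 uS2) iter_prune_fixed // -{2}(prune2_eq_prune1 uS2).
Qed.

Section Hub.
Variables (B : {set T}) (u : T).
Hypothesis e_irr : irreflexive e.
Hypotheses (mem_B : forall v, (v \in B) = (deg e v != 1)) (uB : u \in B).
Hypothesis nbrs_hub : #|[set y in B | e u y]| = 6.
Hypothesis nbrs_B : forall x, x \in B -> x != u -> #|[set y in B | e x y]| = 2.

Local Notation NB x := [set y in B | e x y].

Lemma card_NB_le x : #|NB x| <= deg e x.
Proof. by apply: subset_leq_card; apply/subsetP => y; rewrite !inE => /andP[]. Qed.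

Lemma NB_lt_deg x w : e x w -> w \notin B -> #|NB x| < deg e x.
Proof.
move=> exw wB; apply: proper_card; rewrite properE; apply/andP; split.
  by apply/subsetP => y; rewrite !inE => /andP[].
by apply/subsetPn; exists w; rewrite !inE ?exw // (negbTE wB).
Qed.

Lemma sum_deg_NB x :
  \sum_(w | e x w) deg e w + #|NB x| = \sum_(w in NB x) deg e w + deg e x.
Proof.
have inNB w : (w \in NB x) = e x w && (w \in B) by rewrite !inE andbC.
rewrite (bigID (mem B)) deg_sum1 (bigID (mem B) (e x)) /= (eq_bigl _ _ inNB) -sum1_card.
rewrite (eq_bigl _ _ inNB).
rewrite (eq_bigr (fun=> 1) (P := fun w => e x w && (w \notin B))) => [|w /andP[_]].
  by rewrite addnAC addnA.
by rewrite mem_B negbK => /eqP.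
Qed.

Lemma deg_support x : #|NB x| < deg e x -> ((deg e x)%:Z = a + b - 1)%R.
Proof.
move=> lt; have /subsetPn [w] : ~~ ([set w | e x w] \subset NB x).
  by apply: contraTN lt => /subset_leq_card; rewrite -leqNgt.
rewrite !inE => exw; rewrite exw andbT mem_B negbK => /eqP dw.
by apply: (pendant_nbr_deg dw); rewrite e_sym.
Qed.

Lemma deg_B x : x \in B -> x != u -> ((deg e x)%:Z = 2 \/ (deg e x)%:Z = a + b - 1)%R.
Proof.
move=> xB xu; have := card_NB_le x; rewrite leq_eqVlt nbrs_B // => /orP[/eqP <-|dx].
  by left.
by right; apply: deg_support; rewrite nbrs_B.
Qed.

Lemma deg_hub :
  ((deg e u)%:Z = 6 \/ (deg e u)%:Z = a + b - 1 /\ 7 <= a + b - 1)%R.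
Proof.
have := card_NB_le u; rewrite leq_eqVlt nbrs_hub => /orP[/eqP <-|du]; first by left.
by right; rewrite -(@deg_support u) ?nbrs_hub //; split=> //; lia.
Qed.

Lemma pendant_deg_ge3 v : deg e v = 1 -> (3 <= a + b - 1)%R.
Proof.
move=> dv; have [y evy] : exists y, e v y.
  have /card_gt0P [y] : 0 < deg e v by rewrite dv.
  by rewrite inE; exists y.
have eyv : e y v by rewrite e_sym.
have yB : y \in B.
  rewrite mem_B; apply/negP => /eqP dy.
  have closed x z : x \in [set v; y] -> e x z -> z \in [set v; y].
    rewrite !inE => /orP[]/eqP-> exz.
      by rewrite (deg_eq1P dv exz evy) eqxx orbT.
    by rewrite (deg_eq1P dy exz eyv) eqxx.
  have := connected_closed e_conn closed (x := v) u; rewrite !inE eqxx => /(_ isT).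
  by case/orP => /eqP uv; move: uB; rewrite mem_B uv ?dv ?dy.
have NBy : 2 <= #|NB y| by case: (eqVneq y u) => [->|yu]; rewrite ?nbrs_hub ?nbrs_B.
have vB : v \notin B by rewrite mem_B dv.
have := NB_lt_deg eyv vB; rewrite -(deg_support (NB_lt_deg eyv vB)); lia.
Qed.

Lemma nonhub_other_nbr x y : x \in B -> x != u -> y \in NB x ->
  exists x', [/\ x' \in B, e x x', x' != y &
    ((deg e y)%:Z + (deg e x')%:Z + (deg e x)%:Z - 2
       = a * (deg e x)%:Z + b - (deg e x)%:Z ^+ 2)%R].
Proof.
move=> xB xu yN; have /eqP/cards2P [y1 [y2 [y12 NBx]]] := nbrs_B xB xu.
have sum12 : \sum_(w in NB x) deg e w = deg e y1 + deg e y2.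
  by rewrite NBx big_setU1 ?big_set1 // inE.
have [x' [x'N x'y sumN]] : exists x', [/\ x' \in NB x, x' != y &
    \sum_(w in NB x) deg e w = deg e y + deg e x'].
  have : y \in [set y1; y2] by rewrite -NBx.
  rewrite !inE => /orP[]/eqP->.
    by exists y2; rewrite sum12 NBx !inE eqxx orbT eq_sym.
  by exists y1; rewrite sum12 NBx !inE eqxx addnC.
move: x'N; rewrite inE => /andP[x'B exx']; exists x'; split=> //.
rewrite -sum_deg_nbrsZ; have := sum_deg_NB x; rewrite sumN nbrs_B //; lia.
Qed.

Hypothesis supp_ge3 : (3 <= a + b - 1)%R.

Local Notation supp := [set y | ((deg e y)%:Z == a + b - 1)%R].
Local Notation s := #|NB u :&: supp|.

Lemma hub_nbrP y : y \in NB u -> y \in B /\ y != u.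
Proof.
by rewrite inE => /andP[yB euy]; split=> //; apply: contraTneq euy => ->; rewrite e_irr.
Qed.

Lemma card_supp_hub_nbrs_le : (s <= 6)%N.
Proof. by rewrite -nbrs_hub subset_leq_card // subsetIl. Qed.

Lemma card_bare_hub_nbrs : #|NB u :\: supp| = (6 - s)%N.
Proof. by rewrite -nbrs_hub -(cardsID supp (NB u)) addKn. Qed.

Lemma bare_hub_nbr_deg y : y \in NB u :\: supp -> deg e y = 2.
Proof.
rewrite in_setD in_set => /andP[/eqP dy yN]; have [yB yu] := hub_nbrP yN.
by case: (deg_B yB yu) => [|/dy //]; lia.
Qed.

Lemma sum_deg_hub_nbrs :
  ((\sum_(w in NB u) deg e w)%:Z = (6 - s%:Z) * 2 + s%:Z * (a + b - 1))%R.
Proof.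
rewrite (big_setID supp) /= PoszD !(big_morph Posz PoszD (erefl _)).
rewrite (eq_bigr (fun=> (a + b - 1)%R)) => [|y]; last by rewrite !inE => /andP[_ /eqP].
rewrite [X in (_ + X)%R](eq_bigr (fun=> 2%R)) => [|y yD]; last first.
  by rewrite (bare_hub_nbr_deg yD).
rewrite !sumr_const card_bare_hub_nbrs !pmulrn !mulrzz.
have := card_supp_hub_nbrs_le; lia.
Qed.

Lemma hub_eq : ((deg e u)%:Z - 6 + (6 - s%:Z) * 2 + s%:Z * (a + b - 1)
  = a * (deg e u)%:Z + b - (deg e u)%:Z ^+ 2)%R.
Proof.
have := sum_deg_NB u; have := sum_deg_nbrsZ u; have := sum_deg_hub_nbrs.
rewrite nbrs_hub; lia.
Qed.

Lemma hub_nbr_other_nbr y : y \in NB u -> exists y', [/\ y' \in B, e y y', y' != u &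
  ((deg e u)%:Z + (deg e y')%:Z + (deg e y)%:Z - 2
     = a * (deg e y)%:Z + b - (deg e y)%:Z ^+ 2)%R].
Proof.
move=> yN; have [yB yu] := hub_nbrP yN.
have uN : u \in NB y by rewrite inE uB e_sym; move: yN; rewrite inE => /andP[].
exact: nonhub_other_nbr yB yu uN.
Qed.

Lemma supp_hub_nbr_eq : (0 < s)%N -> exists2 d : int, (d = 2 \/ d = a + b - 1)%R &
  (a + b - 1 - 2 + (deg e u)%:Z + d = a * (a + b - 1) + b - (a + b - 1) ^+ 2)%R.
Proof.
case/card_gt0P => x; rewrite in_setI => /andP[xN]; rewrite in_set => /eqP dx.
have [x' [x'B _ x'u Ex]] := hub_nbr_other_nbr xN.
exists (Posz (deg e x')); first exact: deg_B.
by rewrite -dx -Ex; lia.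
Qed.

Lemma bare_hub_nbr_eq : (s < 6)%N -> exists2 d : int, (d = 2 \/ d = a + b - 1)%R &
  ((deg e u)%:Z + d = a * 2 + b - 2 ^+ 2)%R.
Proof.
rewrite -subn_gt0 -card_bare_hub_nbrs => /card_gt0P [y yD].
have yN : y \in NB u by move: yD; rewrite in_setD => /andP[].
have [y' [y'B _ y'u Ey]] := hub_nbr_other_nbr yN.
exists (Posz (deg e y')); first exact: deg_B.
by move: Ey; rewrite (bare_hub_nbr_deg yD); lia.
Qed.

Lemma bare_hub_nbr_supported :
  deg e u = 6 -> a = 9 -> (a + b - 1 = 6 \/ a + b - 1 = 7)%R ->
  forall y, y \in NB u :\: supp -> exists2 x, x \in NB u :&: supp & e x y.
Proof.
move=> Du a9 k67 y yD; have yN : y \in NB u by move: yD; rewrite in_setD => /andP[].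
have [yB _] := hub_nbrP yN.
have [y' [y'B eyy' y'u Ey]] := hub_nbr_other_nbr yN.
rewrite (bare_hub_nbr_deg yD) Du a9 in Ey.
have dy' : ((deg e y')%:Z = a + b - 1)%R by rewrite a9; lia.
have yN' : y \in NB y' by rewrite inE yB e_sym.
have [z [zB ey'z _ Ez]] := nonhub_other_nbr y'B y'u yN'.
have zu : z = u.
  case: (eqVneq z u) => [-> //|zu]; exfalso.
  apply: (supported_pair_arith a9 k67 (deg_B zB zu)).
  by move: Ez; rewrite dy' (bare_hub_nbr_deg yD).
exists y'; last by rewrite e_sym.
by apply/setIP; split; rewrite inE ?dy' ?eqxx // y'B -zu e_sym.
Qed.

Lemma hub_with_pendant_False : False.
Proof.
have [Du a9 s1 k67] := hub_arith supp_ge3 (erefl _) deg_hub card_supp_hub_nbrs_le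
  hub_eq supp_hub_nbr_eq bare_hub_nbr_eq.
have {}Du : deg e u = 6 by lia.
have /cards1P [x Hx] : #|NB u :&: supp| == 1 by rewrite s1.
have xN : x \in NB u by have := set11 x; rewrite -Hx => /setIP[].
have [xB xu] := hub_nbrP xN.
have bare_in_NBx y : y \in NB u :\: supp -> y \in NB x /\ y != u.
  move=> yD; have yN : y \in NB u by move: yD; rewrite in_setD => /andP[].
  have [yB yu] := hub_nbrP yN; split=> //.
  have [x' + ex'y] := bare_hub_nbr_supported Du a9 k67 yD.
  by rewrite Hx inE => /eqP x'x; rewrite inE yB -x'x.
have /card_gt1P [y1 [y2 [/bare_in_NBx [y1N y1u] /bare_in_NBx [y2N y2u] y12]]] :
  1 < #|NB u :\: supp| by rewrite card_bare_hub_nbrs s1.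
have uNx : u \in NB x by rewrite inE uB e_sym; move: xN; rewrite inE => /andP[].
have : 2 < #|NB x| by apply/card_gt2P; exists u, y1, y2; rewrite eq_sym y1u y12 y2u.
by rewrite nbrs_B.
Qed.

End Hub.

End TwoMainEigenvalues.

Theorem proposition2 (T : finType) (e : rel T) :
  simple_graph e -> tricyclic e -> (exists v, pendant e v) ->
  (exists u : T, three_cycles_at e (base e) u) ->
  forall a b : int, ~ in_Gab e a b.
Proof.
move=> [e_sym e_irr] _ [v /eqP pv] [u three] a b [e_conn deg_eq].
have [uB nbrs_u nbrs_B] := three_cycles_nbrs three.
have baseE := base_eq_prune1 e_sym e_conn deg_eq uB.
rewrite baseE in uB nbrs_u nbrs_B.
have mem_B := mem_prune_setT e.
have supp_ge3 := pendant_deg_ge3 e_sym e_conn deg_eq mem_B uB nbrs_u nbrs_B pv.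
exact: (hub_with_pendant_False e_sym deg_eq e_irr mem_B uB nbrs_u nbrs_B supp_ge3).
Qed.
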